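(* Let $(A_0,A_1,A_2)$ be an extendable collection of cap sets in $\mathbb{F}_3^n$, and let $S \subseteq \{0,1,2\}^m$ be a recursively admissible set. Then $\left(S(A_0,A_1,A_2), A_1^m, A_2^m\right)$ is an extendable collection of cap sets in $\mathbb{F}_3^{nm}$.
   Context: A cap set is a set $A \subseteq \mathbb{F}_3^n$ such that the only solutions of $x+y+z=0$ with $x,y,z\in A$ are those with $x=y=z$. Cap sets $A_0,A_1,A_2\subseteq\mathbb{F}_3^n$ form an extendable collection if (1) whenever $x,y\in A_0$ (not necessarily distinct) and $z\in A_1\cup A_2$, $x+y+z\neq 0$; and (2) whenever $x\in A_0$, $y\in A_1$, $z\in A_2$, $x+y+z\neq 0$. A set $S\subseteq\{0,1,2\}^m$ is admissible if (1) for all distinct $s,s'\in S$ there are coordinates $i,j$ with $s_i=0\neq s'_i$ and $s_j\neq 0=s'_j$; and (2) for all distinct $s,s',s''\in S$ there is a coordinate $k$ such that the multiset $\{s_k,s'_k,s''_k\}$ equals $\{0,1,2\}$, $\{0,0,1\}$ or $\{0,0,2\}$. $S$ is recursively admissible if it is admissible, $|S|\ge 2$, and for every pair of distinct $s,s'\in S$ at least one of the following holds: (i) there are coordinates $i,j$ with $\{s_i,s'_i\}=\{0,1\}$ and $\{s_j,s'_j\}=\{0,2\}$; (ii) there is a coordinate $k$ with $s_k=s'_k=0$. For $s=(s_1,\dots,s_m)\in\{0,1,2\}^m$ put $s(A_0,A_1,A_2)=A_{s_1}\times\cdots\times A_{s_m}\subseteq\mathbb{F}_3^{nm}$ and $S(A_0,A_1,A_2)=\bigcup_{s\in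 S}s(A_0,A_1,A_2)$. $A_i^m$ denotes the $m$-fold direct product $A_i\times\cdots\times A_i\subseteq \mathbb{F}_3^{nm}$. *)

From HB Require Import structures.
From mathcomp Require Import all_boot all_order all_algebra.
Set Implicit Arguments. Unset Strict Implicit. Unset Printing Implicit Defensive.
Import GRing.Theory.
Local Open Scope ring_scope.

(* F_3^{nm} is modelled by m x n matrices 'M['F_3]_(m,n): the i-th block
   (of n coordinates) of a vector of F_3^{nm} is the i-th row.
   Addition is entrywise, so this is an isomorphism of F_3-vector spaces. *)

Definition cap_set (V : finZmodType) (A : {set V}) : Prop :=
  forall x y z, x \in A -> y \in A -> z \in A -> x + y + z = 0 ->
    x = y /\ y = z.

Definition extendable (V : finZmodType) (A0 A1 A2 : {set V}) : Prop :=
  [/\ cap_set A0, cap_set A1, cap_set A2,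
      (forall x y z, x \in A0 -> y \in A0 -> (z \in A1) || (z \in A2) ->
         x + y + z != 0) &
      (forall x y z, x \in A0 -> y \in A1 -> z \in A2 -> x + y + z != 0)].

Definition word (m : nat) := {ffun 'I_m -> 'I_3}.

Definition admissible (m : nat) (S : {set word m}) : Prop :=
  (forall s s', s \in S -> s' \in S -> s != s' ->
     exists i j, [/\ (s i : nat) = 0%N, (s' i : nat) <> 0%N,
                     (s j : nat) <> 0%N & (s' j : nat) = 0%N]) /\
  (forall s s' s'', s \in S -> s' \in S -> s'' \in S ->
     s != s' -> s != s'' -> s' != s'' ->
     exists k, let t := [:: (s k : nat); (s' k : nat); (s'' k : nat)] in
       [|| perm_eq t [:: 0; 1; 2]%N, perm_eq t [:: 0; 0; 1]%N
         | perm_eq t [:: 0; 0; 2]%N]).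

Definition recursively_admissible (m : nat) (S : {set word m}) : Prop :=
  [/\ admissible S, (2 <= #|S|)%N &
      forall s s', s \in S -> s' \in S -> s != s' ->
        (exists i j, perm_eq [:: (s i : nat); (s' i : nat)] [:: 0; 1]%N /\
                     perm_eq [:: (s j : nat); (s' j : nat)] [:: 0; 2]%N)
        \/ (exists k, (s k : nat) = 0%N /\ (s' k : nat) = 0%N)].

Definition sel (T : Type) (A0 A1 A2 : T) (j : 'I_3) : T :=
  match nat_of_ord j with 0 => A0 | 1 => A1 | _ => A2 end.

Definition prodset (n m : nat) (f : 'I_m -> {set 'rV['F_3]_n})
  : {set 'M['F_3]_(m, n)} :=
  [set x | [forall i, row i x \in f i]].

Definition word_set (n m : nat) (A0 A1 A2 : {set 'rV['F_3]_n}) (s : word m) :=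
  prodset (fun i => sel A0 A1 A2 (s i)).

Definition words_set (n m : nat) (A0 A1 A2 : {set 'rV['F_3]_n})
  (S : {set word m}) : {set 'M['F_3]_(m, n)} :=
  \bigcup_(s in S) word_set A0 A1 A2 s.

Definition powset (n m : nat) (A : {set 'rV['F_3]_n}) : {set 'M['F_3]_(m, n)} :=
  prodset (fun _ => A).

(* Write x + y + z = 0 in F_3^{nm} row by row.  If x, y, z lie in the boxes
   s(A0,A1,A2), s'(A0,A1,A2), s''(A0,A1,A2), then every row k gives a zero sum
   with summands in A_{s_k}, A_{s'_k}, A_{s''_k}; extendability of (A0,A1,A2)
   forbids this whenever the multiset {s_k, s'_k, s''_k} is {0,1,2}, {0,0,1} or
   {0,0,2}.  Admissibility of S provides such a coordinate for any three words
   of S that are not all equal, and recursive admissibility provides one for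
   two words of S together with a constant word 1...1 or 2...2.  When all three
   words coincide, the box is a product of cap sets, hence a cap set. *)

From mathcomp Require Import all_boot all_order all_algebra.
Import GRing.Theory.
Local Open Scope ring_scope.
Set Implicit Arguments. Unset Strict Implicit.

Definition forbidden_triple (t : seq nat) : bool :=
  [|| perm_eq t [:: 0; 1; 2]%N, perm_eq t [:: 0; 0; 1]%N
    | perm_eq t [:: 0; 0; 2]%N].

Lemma forbidden_triple_perm (t t' : seq nat) :
  perm_eq t t' -> forbidden_triple t = forbidden_triple t'.
Proof. by move=> tt'; rewrite /forbidden_triple !(permPl tt'). Qed.

Lemma forbidden_triple_perm_catr (t t' u : seq nat) :
  perm_eq t t' -> forbidden_triple (t ++ u) = forbidden_triple (t' ++ u).
Proof. by rewrite -(perm_cat2r u); apply: forbidden_triple_perm. Qed.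

Lemma forbidden_triple_00 (j : 'I_3) :
  (j : nat) <> 0%N -> forbidden_triple [:: 0%N; 0%N; (j : nat)].
Proof. by case: j => [[|[|[|?]]] ?]. Qed.

Section ExtendableTriple.

Variables (V : finZmodType) (A0 A1 A2 : {set V}).
Hypothesis ext : extendable A0 A1 A2.

Lemma extendable_sel_cap (j : 'I_3) : cap_set (sel A0 A1 A2 j).
Proof. by case: ext => cap0 cap1 cap2 _ _; case: j => [[|[|[|?]]] ?]. Qed.

Lemma extendable_zero_sum_not_forbidden (t1 t2 t3 : 'I_3) x y z :
  x \in sel A0 A1 A2 t1 -> y \in sel A0 A1 A2 t2 -> z \in sel A0 A1 A2 t3 ->
  x + y + z = 0 -> ~~ forbidden_triple [:: (t1 : nat); (t2 : nat); (t3 : nat)].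
Proof.
case: ext => _ _ _ ext00 ext012 hx hy hz xyz0.
have no001 u v w : u + v + w = 0 -> u \in A0 -> v \in A0 -> w \in A1 -> False.
  move=> uvw0 hu hv hw; move: (ext00 u v w hu hv).
  by rewrite hw uvw0 eqxx => /(_ isT).
have no002 u v w : u + v + w = 0 -> u \in A0 -> v \in A0 -> w \in A2 -> False.
  move=> uvw0 hu hv hw; move: (ext00 u v w hu hv).
  by rewrite hw orbT uvw0 eqxx => /(_ isT).
have no012 u v w : u + v + w = 0 -> u \in A0 -> v \in A1 -> w \in A2 -> False.
  by move=> uvw0 hu hv hw; move: (ext012 u v w hu hv hw); rewrite uvw0 eqxx.
(* Extendability is stated for sums in a fixed order; the permuted sums let it
   apply whatever the order of t1, t2, t3. *)
have [yxz0 xzy0 zyx0 yzx0 zxy0] : [/\ y + x + z = 0, x + z + y = 0,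
    z + y + x = 0, y + z + x = 0 & z + x + y = 0].
  split; [rewrite (addrC y) | rewrite addrAC
         | rewrite [LHS]addrC [z + y]addrC addrA | rewrite [LHS]addrC addrA
         | rewrite (addrC z) addrAC] => //.
move: hx hy hz.
case: t1 => [[|[|[|?]]] ?] //; case: t2 => [[|[|[|?]]] ?] //;
case: t3 => [[|[|[|?]]] ?] //; rewrite /sel /= => hx hy hz //; exfalso;
match goal with e : ?u + ?v + ?w = 0 |- _ =>
  first [by apply: (no001 _ _ _ e) | by apply: (no002 _ _ _ e)
        | by apply: (no012 _ _ _ e)] end.
Qed.

End ExtendableTriple.

Lemma row_zero_sum (R : zmodType) (m n : nat) (k : 'I_m)
    (x y z : 'M[R]_(m, n)) :
  x + y + z = 0 -> row k x + row k y + row k z = 0.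
Proof. by move=> xyz0; rewrite -!raddfD /= xyz0 row0. Qed.

Lemma prodset_cap (n m : nat) (f : 'I_m -> {set 'rV['F_3]_n}) :
  (forall i, cap_set (f i)) -> cap_set (prodset f).
Proof.
move=> capf x y z; rewrite !inE => /forallP hx /forallP hy /forallP hz xyz0.
by split; apply/row_matrixP => k;
  case: (capf k _ _ _ (hx k) (hy k) (hz k) (row_zero_sum k xyz0)).
Qed.

Definition const_word (m : nat) (j : 'I_3) : word m := [ffun=> j].

Section WordSets.

Variables (n m : nat) (A0 A1 A2 : {set 'rV['F_3]_n}).
Hypothesis ext : extendable A0 A1 A2.

Lemma word_set_cap (s : word m) : cap_set (word_set A0 A1 A2 s).
Proof. by apply: prodset_cap => i; apply: extendable_sel_cap. Qed.

Lemma powset_sel (j : 'I_3) :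
  powset m (sel A0 A1 A2 j) = word_set A0 A1 A2 (const_word m j).
Proof.
by apply/setP => x; rewrite !inE; apply: eq_forallb => i; rewrite ffunE.
Qed.

Lemma word_set_zero_sum_free (s1 s2 s3 : word m) x y z :
  (exists k, forbidden_triple [:: (s1 k : nat); (s2 k : nat); (s3 k : nat)]) ->
  x \in word_set A0 A1 A2 s1 -> y \in word_set A0 A1 A2 s2 ->
  z \in word_set A0 A1 A2 s3 -> x + y + z != 0.
Proof.
move=> [k forb_k]; rewrite !inE => /forallP hx /forallP hy /forallP hz.
apply/eqP => xyz0; move: forb_k; apply/negP.
apply: (extendable_zero_sum_not_forbidden ext (hx k) (hy k) (hz k)).
exact: row_zero_sum.
Qed.

End WordSets.

Section AdmissibleWords.

Variables (m : nat) (S : {set word m}).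
Hypothesis adm : admissible S.

Lemma admissible_pair_forbidden s s' : s \in S -> s' \in S -> s != s' ->
  exists k, forbidden_triple [:: (s k : nat); (s k : nat); (s' k : nat)].
Proof.
case: adm => adm2 _ sS s'S ss'.
have [k [_ [sk0 s'k0 _ _]]] := adm2 s s' sS s'S ss'.
by exists k; rewrite sk0; apply: forbidden_triple_00.
Qed.

Lemma admissible_triple_forbidden s s' s'' :
  s \in S -> s' \in S -> s'' \in S -> ~~ ((s == s') && (s' == s'')) ->
  exists k, forbidden_triple [:: (s k : nat); (s' k : nat); (s'' k : nat)].
Proof.
case: adm => _ adm3 sS s'S s''S.
have [<- /= ss''|ss' _] := eqVneq s s'; first exact: admissible_pair_forbidden.
have [<-|s's''] := eqVneq s' s''.
  rewrite eq_sym in ss'; have [k forb_k] := admissible_pair_forbidden s'S sS ss'.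
  exists k; rewrite (forbidden_triple_perm
    (t' := [:: (s' k : nat); (s' k : nat); (s k : nat)])) //.
  by rewrite (perm_catC [:: _]).
have [<-|ss''] := eqVneq s s''; last exact: adm3.
have [k forb_k] := admissible_pair_forbidden sS s'S ss'.
exists k; rewrite (forbidden_triple_perm
  (t' := [:: (s k : nat); (s k : nat); (s' k : nat)])) //.
by rewrite perm_cons (perm_catC [:: _]).
Qed.

Lemma admissible_word_has_zero s : (2 <= #|S|)%N -> s \in S ->
  exists k, (s k : nat) = 0%N.
Proof.
case: adm => adm2 _ cardS sS.
rewrite (cardsD1 s S) sS ltnS card_gt0 in cardS.
case/set0Pn: cardS => s'; rewrite !inE eq_sym => /andP [ss' s'S].
by have [k [_ [sk0 _ _ _]]] := adm2 s s' sS s'S ss'; exists k.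
Qed.

End AdmissibleWords.

Lemma recursively_admissible_const_forbidden (m : nat) (S : {set word m})
    s s' (w : 'I_3) :
  recursively_admissible S -> s \in S -> s' \in S -> (w : nat) <> 0%N ->
  exists k, forbidden_triple [:: (s k : nat); (s' k : nat); (w : nat)].
Proof.
case=> adm cardS rec sS s'S w0.
have [<-|ss'] := eqVneq s s'.
  have [k sk0] := admissible_word_has_zero adm cardS sS.
  by exists k; rewrite sk0; apply: forbidden_triple_00.
case: (rec s s' sS s'S ss') => [[i [j [si01 sj02]]] | [k [sk0 s'k0]]]; last first.
  by exists k; rewrite sk0 s'k0; apply: forbidden_triple_00.
move: w0; case: w => [[|[|[|?]]] ?] // _.
  exists j; rewrite -[[:: _; _; _]]/([:: _; _] ++ [:: _]).
  by rewrite (forbidden_triple_perm_catr _ sj02).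
exists i; rewrite -[[:: _; _; _]]/([:: _; _] ++ [:: _]).
by rewrite (forbidden_triple_perm_catr _ si01).
Qed.

Theorem lemma2p9 (n m : nat) (A0 A1 A2 : {set 'rV['F_3]_n}) (S : {set word m}) :
  extendable A0 A1 A2 ->
  recursively_admissible S ->
  extendable (words_set A0 A1 A2 S) (powset m A1) (powset m A2).
Proof.
move=> ext recS; have [adm cardS _] := recS; have [_ cap1 cap2 _ _] := ext.
have powset1 : powset m A1 = word_set A0 A1 A2 (const_word m (@Ordinal 3 1 isT)).
  by rewrite -powset_sel.
have powset2 : powset m A2 = word_set A0 A1 A2 (const_word m (@Ordinal 3 2 isT)).
  by rewrite -powset_sel.
split.
- move=> x y z /bigcupP [s sS xs] /bigcupP [s' s'S ys] /bigcupP [s'' s''S zs].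
  have [/andP [/eqP ss' /eqP s's'']|not_eq] := boolP ((s == s') && (s' == s'')).
    by subst s' s''; exact: word_set_cap ext s x y z xs ys zs.
  move=> xyz0; move: (word_set_zero_sum_free ext
    (admissible_triple_forbidden adm sS s'S s''S not_eq) xs ys zs).
  by rewrite xyz0 eqxx.
- exact: prodset_cap.
- exact: prodset_cap.
- move=> x y z /bigcupP [s sS xs] /bigcupP [s' s'S ys] zA12.
  have [w w0 zw] : exists2 w : 'I_3,
      (w : nat) <> 0%N & z \in word_set A0 A1 A2 (const_word m w).
    case/orP: zA12 => [z1 | z2].
      by exists (@Ordinal 3 1 isT); last rewrite -powset1.
    by exists (@Ordinal 3 2 isT); last rewrite -powset2.
  have [k forb_k] := recursively_admissible_const_forbidden recS sS s'S w0.
  apply: (word_set_zero_sum_free ext _ xs ys zw).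
  by exists k; rewrite ffunE.
- move=> x y z /bigcupP [s sS xs]; rewrite powset1 powset2 => y1 z2.
  have [k sk0] := admissible_word_has_zero adm cardS sS.
  apply: (word_set_zero_sum_free ext _ xs y1 z2).
  by exists k; rewrite !ffunE sk0.
Qed.
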